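(* Let $x\cdot y$ be a PA-structure on $(\mathfrak{g},\mathfrak{n})$, where $\mathfrak{g}$ and $\mathfrak{n}$ are $2$-step nilpotent, and suppose that $$[L(x)+R(x),\mathrm{ad}(y)]=\mathrm{ad}(x\cdot y+y\cdot x)\quad\text{for all }x,y\in V. \qquad (\ast)$$ Then for all $x,y\in V$: $$[L(x)+R(x),\mathrm{ad}(y)]=[L(y)+R(y),\mathrm{ad}(x)],$$ $$2[L(x),\mathrm{ad}(y)]+2[\mathrm{ad}(x),L(y)]=[\mathrm{ad}(y),\mathrm{Ad}(x)]+[\mathrm{Ad}(y),\mathrm{ad}(x)].$$
   Context: Let $K$ be a field of characteristic zero and $V$ a finite-dimensional vector space over $K$. Let $\mathfrak{g}=(V,[\,,])$ and $\mathfrak{n}=(V,\{\,,\})$ be two Lie algebra structures on $V$. A post-Lie algebra structure (PA-structure) on the pair $(\mathfrak{g},\mathfrak{n})$ is a $K$-bilinear product $x\cdot y$ on $V$ satisfying, for all $x,y,z\in V$: (i) $x\cdot y-y\cdot x=[x,y]-\{x,y\}$; (ii) $[x,y]\cdot z=x\cdot(y\cdot z)-y\cdot(x\cdot z)$; (iii) $x\cdot\{y,z\}=\{x\cdot y,z\}+\{y,x\cdot z\}$. Write $L(x)(y)=x\cdot y$, $R(x)(y)=y\cdot x$, $\mathrm{ad}(x)(y)=[x,y]$, $\mathrm{Ad}(x)(y)=\{x,y\}$; brackets of operators are commutators in $\mathrm{End}(V)$. A Lie algebra is called $2$-step nilpotent here if it is nilpotent of class at most $2$, i.e. all brackets of the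 form $[[x,y],z]$ vanish. *)

From HB Require Import structures.
From mathcomp Require Import all_boot all_order all_algebra.
Set Implicit Arguments. Unset Strict Implicit. Unset Printing Implicit Defensive.
Import GRing.Theory.
Local Open Scope ring_scope.

Definition bilinear_prod (K : fieldType) (V : vectType K) (m : V -> V -> V) : Prop :=
  (forall a x y z, m (a *: x + y) z = a *: m x z + m y z) /\
  (forall a x y z, m x (a *: y + z) = a *: m x y + m x z).

Definition is_lie (K : fieldType) (V : vectType K) (br : V -> V -> V) : Prop :=
  [/\ bilinear_prod br,
      (forall x, br x x = 0) &
      (forall x y z, br x (br y z) + br y (br z x) + br z (br x y) = 0)].

Definition two_step_nilpotent (K : fieldType) (V : vectType K) (br : V -> V -> V) : Prop :=
  forall x y z, br (br x y) z = 0.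

(* Post-Lie algebra structure on (g, n) = ((V, br), (V, nbr)). *)
Definition is_PA (K : fieldType) (V : vectType K)
    (br nbr prod : V -> V -> V) : Prop :=
  [/\ bilinear_prod prod,
      (forall x y, prod x y - prod y x = br x y - nbr x y),
      (forall x y z, prod (br x y) z = prod x (prod y z) - prod y (prod x z)) &
      (forall x y z, prod x (nbr y z) = nbr (prod x y) z + nbr y (prod x z))].

Definition Lop (K : fieldType) (V : vectType K) (prod : V -> V -> V) (x : V) : V -> V :=
  fun y => prod x y.
Definition Rop (K : fieldType) (V : vectType K) (prod : V -> V -> V) (x : V) : V -> V :=
  fun y => prod y x.
Definition adop (K : fieldType) (V : vectType K) (br : V -> V -> V) (x : V) : V -> V :=
  fun y => br x y.
Definition opadd (K : fieldType) (V : vectType K) (f g : V -> V) : V -> V :=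
  fun v => f v + g v.
Definition opscale (K : fieldType) (V : vectType K) (a : K) (f : V -> V) : V -> V :=
  fun v => a *: f v.
Definition opcomm (K : fieldType) (V : vectType K) (f g : V -> V) : V -> V :=
  fun v => f (g v) - g (f v).

From HB Require Import structures.
From mathcomp Require Import all_boot all_order all_algebra.
From Stdlib Require Import FunctionalExtensionality.
Set Implicit Arguments. Unset Strict Implicit. Unset Printing Implicit Defensive.
Import GRing.Theory.
Local Open Scope ring_scope.

(* Write T(x, y) := [L(x) + R(x), ad(y)].  The hypothesis T(x, y) = ad(x.y + y.x)
   makes T symmetric, which is the first claim.  For the second, substitute
   {u, v} = [u, v] - (u.v - v.u); since 2-step nilpotency kills [y, [x, z]],
   the mixed commutators split as
     [ad(y), Ad(x)] = [L(x), ad(y)] - [R(x), ad(y)],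
     [Ad(y), ad(x)] = [ad(x), L(y)] + [R(y), ad(x)],
   and T(x, y) = T(y, x) says [R(y), ad(x)] - [R(x), ad(y)] equals
   [L(x), ad(y)] + [ad(x), L(y)], so the sum of the two mixed commutators is
   twice that. *)

Section BilinearProduct.
Variables (K : fieldType) (V : vectType K) (m : V -> V -> V).
Hypothesis m_bilinear : bilinear_prod m.

Lemma bilinear_prodDl x y z : m (x + y) z = m x z + m y z.
Proof. by rewrite -[x]scale1r m_bilinear.1 !scale1r. Qed.

Lemma bilinear_prodDr x y z : m x (y + z) = m x y + m x z.
Proof. by rewrite -[y]scale1r m_bilinear.2 !scale1r. Qed.

Lemma bilinear_prodBr x y z : m x (y - z) = m x y - m x z.
Proof. by rewrite addrC -scaleN1r m_bilinear.2 scaleN1r addrC. Qed.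

End BilinearProduct.

Section TwoStepNilpotentLie.
Variables (K : fieldType) (V : vectType K) (br : V -> V -> V).
Hypotheses (br_lie : is_lie br) (br_nil : two_step_nilpotent br).

Lemma lie_skew u v : br u v = - br v u.
Proof.
have [br_bilin br_alt _] := br_lie.
apply/eqP; rewrite -addr_eq0; apply/eqP.
have := br_alt (u + v).
rewrite !(bilinear_prodDl br_bilin, bilinear_prodDr br_bilin) !br_alt.
by rewrite add0r addr0.
Qed.

Lemma two_step_nilpotent_r u v w : br u (br v w) = 0.
Proof. by rewrite lie_skew br_nil oppr0. Qed.

End TwoStepNilpotentLie.

Section OperatorCommutator.
Variables (K : fieldType) (V : vectType K).
Implicit Types f g h : V -> V.

Lemma opcommC f g v : opcomm f g v = - opcomm g f v.
Proof. by rewrite /opcomm opprB. Qed.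

Lemma opcommDl f g h v :
  (forall u w, h (u + w) = h u + h w) ->
  opcomm (opadd f g) h v = opcomm f h v + opcomm g h v.
Proof. by move=> h_add; rewrite /opcomm /opadd h_add opprD addrACA. Qed.

End OperatorCommutator.

Section PostLie.
Variables (K : fieldType) (V : vectType K) (br nbr prod : V -> V -> V).
Hypotheses (br_lie : is_lie br) (br_nil : two_step_nilpotent br).
Hypothesis prod_PA : is_PA br nbr prod.

Lemma PA_nbrE u v : nbr u v = br u v - (prod u v - prod v u).
Proof. by have [_ -> _ _] := prod_PA; rewrite opprB addrC subrK. Qed.

Let br_bilinear : bilinear_prod br. Proof. by case: br_lie. Qed.

Lemma opcomm_ad_AdE x y z :
  opcomm (adop br y) (adop nbr x) z
  = opcomm (Lop prod x) (adop br y) z - opcomm (Rop prod x) (adop br y) z.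
Proof.
rewrite /opcomm /adop /Lop /Rop !PA_nbrE !(bilinear_prodBr br_bilinear).
rewrite !(two_step_nilpotent_r br_lie br_nil) !sub0r opprK.
by rewrite !opprB [LHS]addrC addrACA [RHS]addrACA [- prod (br y z) x + _]addrC.
Qed.

Lemma opcomm_Ad_adE x y z :
  opcomm (adop nbr y) (adop br x) z
  = opcomm (adop br x) (Lop prod y) z + opcomm (Rop prod y) (adop br x) z.
Proof. by rewrite opcommC opcomm_ad_AdE opprB addrC -opcommC. Qed.

Lemma opcomm_LR_adE x y z :
  opcomm (opadd (Lop prod x) (Rop prod x)) (adop br y) z
  = opcomm (Lop prod x) (adop br y) z + opcomm (Rop prod x) (adop br y) z.
Proof. exact/opcommDl/bilinear_prodDr. Qed.

End PostLie.

Lemma twice_sumE (V : zmodType) (a b c d : V) :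
  a + c = - b + d -> a *+ 2 + b *+ 2 = (a - c) + (b + d).
Proof.
move=> /esym/(canRL (addNKr b)) ->.
by rewrite [RHS](AC (2*(1*(1*2))) (((1*5)*(3*4))*(2*6)))%AC /= addNr addr0 -!mulr2n.
Qed.

Theorem lemma4p2 (K : fieldType) (V : vectType K)
    (br nbr prod : V -> V -> V) :
  [pchar K] =i pred0 ->
  is_lie br -> is_lie nbr ->
  two_step_nilpotent br -> two_step_nilpotent nbr ->
  is_PA br nbr prod ->
  (forall x y,
      opcomm (opadd (Lop prod x) (Rop prod x)) (adop br y)
      = adop br (prod x y + prod y x)) ->
  forall x y,
    opcomm (opadd (Lop prod x) (Rop prod x)) (adop br y)
      = opcomm (opadd (Lop prod y) (Rop prod y)) (adop br x) /\
    opadd (opscale 2 (opcomm (Lop prod x) (adop br y)))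
          (opscale 2 (opcomm (adop br x) (Lop prod y)))
      = opadd (opcomm (adop br y) (adop nbr x)) (opcomm (adop nbr y) (adop br x)).
Proof.
move=> _ br_lie _ br_nil _ prod_PA T_adE x y.
have T_sym : opcomm (opadd (Lop prod x) (Rop prod x)) (adop br y)
           = opcomm (opadd (Lop prod y) (Rop prod y)) (adop br x).
  by rewrite !T_adE addrC.
split=> //; apply: functional_extensionality => z.
have := congr1 (fun f => f z) T_sym.
rewrite /= !(opcomm_LR_adE prod br_lie) [opcomm (Lop prod y) _ z]opcommC.
move/twice_sumE; rewrite /opadd /opscale !scaler_nat => ->.
by rewrite (opcomm_ad_AdE br_lie br_nil prod_PA) (opcomm_Ad_adE br_lie br_nil prod_PA).
Qed.
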